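(* Let $X$ be a locally compact locale with frame presentation $\mathcal{O}X=\langle G\mid R\rangle$, let $\mathrm{ev}\colon\Sigma^X\times X\to\Sigma$ be the evaluation map of the exponential $\Sigma^X$, let $\widetilde{\mathrm{ev}}=\mathrm{ev}_{\Sigma^G}\circ(\Sigma^{\Sigma^G}\times i_X)\colon\Sigma^{\Sigma^G}\times X\to\Sigma$, and let $q\colon\Sigma^{\Sigma^G}\to\Sigma^X$ be the unique locale map with $\mathrm{ev}\circ(q\times X)=\widetilde{\mathrm{ev}}$ (equivalently $q=\Sigma^{i_X}$). Then there is a locale map $s\colon\Sigma^X\to\Sigma^{\Sigma^G}$ with $q\circ s=\mathrm{id}_{\Sigma^X}$ and $\widetilde{\mathrm{ev}}\circ(s\times X)=\mathrm{ev}$.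
   Context: A frame is a complete lattice in which finite meets distribute over arbitrary joins; a locale $X$ is formally a frame $\mathcal{O}X$, and a locale map $f\colon X\to Y$ is a frame homomorphism $f^*\colon\mathcal{O}Y\to\mathcal{O}X$. $\Sigma$ is the Sierpiński locale (frame = free frame on one generator). For a set $G$, $\Sigma^G$ is the locale whose frame is the free frame on $G$; it is locally compact, so $\Sigma^{\Sigma^G}$ exists, with evaluation map $\mathrm{ev}_{\Sigma^G}\colon\Sigma^{\Sigma^G}\times\Sigma^G\to\Sigma$. A presentation $\mathcal{O}X=\langle G\mid R\rangle$ means $\mathcal{O}X$ is the quotient of the free frame on $G$ by the congruence generated by the relations $R$; the quotient map is $i_X^*$ for a sublocale inclusion $i_X\colon X\hookrightarrow\Sigma^G$. Since $X$ is locally compact, the exponential $\Sigma^X$ exists. *)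

From Stdlib Require Import List.

Record frame := Frame {
  carrier :> Type;
  le : carrier -> carrier -> Prop;
  meet : carrier -> carrier -> carrier;
  top : carrier;
  join : forall I : Type, (I -> carrier) -> carrier;
  le_refl : forall a, le a a;
  le_trans : forall a b c, le a b -> le b c -> le a c;
  le_antisym : forall a b, le a b -> le b a -> a = b;
  meet_l : forall a b, le (meet a b) a;
  meet_r : forall a b, le (meet a b) b;
  meet_glb : forall a b c, le c a -> le c b -> le c (meet a b);
  top_max : forall a, le a top;
  join_ub : forall (I : Type) (f : I -> carrier) (i : I), le (f i) (join I f);
  join_least : forall (I : Type) (f : I -> carrier) (a : carrier),
      (forall i, le (f i) a) -> le (join I f) a;
  meet_join_distr : forall (a : carrier) (I : Type) (f : I -> carrier),
      meet a (join I f) = join I (fun i => meet a (f i))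
}.

(** Frame homomorphisms: preserve finite meets and arbitrary joins.
    A locale map f : X -> Y is a frame homomorphism f^* : OY -> OX. *)
Record frame_hom (A B : frame) := FrameHom {
  hom_fun :> A -> B;
  hom_top : hom_fun (top A) = top B;
  hom_meet : forall a b, hom_fun (meet A a b) = meet B (hom_fun a) (hom_fun b);
  hom_join : forall (I : Type) (f : I -> A),
      hom_fun (join A I f) = join B I (fun i => hom_fun (f i))
}.
Arguments hom_fun {A B}.

Definition id_hom (A : frame) : frame_hom A A.
Proof.
  refine (@FrameHom A A (fun x => x) _ _ _); reflexivity.
Defined.

Definition way_below (A : frame) (a b : A) : Prop :=
  forall (I : Type) (f : I -> A), le A b (join A I f) ->
    exists l : list I,
      le A a (join A {i : I | List.In i l} (fun i => f (proj1_sig i))).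

Definition locally_compact (A : frame) : Prop :=
  forall a : A, a = join A {b : A | way_below A b a} (fun b => proj1_sig b).

(** * Free frames: [eta : G -> F] exhibits [F] as the free frame on [G].
    O(Sigma^G) is the free frame on G; O(Sigma) the free frame on one
    generator. *)
Definition is_free_frame (G : Type) (F : frame) (eta : G -> F) : Prop :=
  (forall (L : frame) (g : G -> L),
      exists h : frame_hom F L, forall x, h (eta x) = g x) /\
  (forall (L : frame) (h1 h2 : frame_hom F L),
      (forall x, h1 (eta x) = h2 (eta x)) -> forall y, h1 y = h2 y).

(** * Binary products of locales = coproducts of frames.
    [P] with injections [pA : OA -> P], [pB : OB -> P] (the frame maps of
    the two projections) is the frame of the product locale A x B. *)
Definition is_product (A B P : frame) (pA : frame_hom A P) (pB : frame_hom B P)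
  : Prop :=
  (forall (L : frame) (a : frame_hom A L) (b : frame_hom B L),
      exists h : frame_hom P L,
        (forall x, h (pA x) = a x) /\ (forall y, h (pB y) = b y)) /\
  (forall (L : frame) (h1 h2 : frame_hom P L),
      (forall x, h1 (pA x) = h2 (pA x)) ->
      (forall y, h1 (pB y) = h2 (pB y)) -> forall z, h1 z = h2 z).

(** [k : P -> P'] is the frame map of the product locale map
    [g x h : A' x B' -> A x B], where [f = g^* : OA -> OA'] and
    [g' = h^* : OB -> OB'], and P = O(A x B), P' = O(A' x B'). *)
Definition is_prod_hom {A B A' B' P P' : frame}
  (pA : frame_hom A P) (pB : frame_hom B P)
  (pA' : frame_hom A' P') (pB' : frame_hom B' P')
  (f : frame_hom A A') (g : frame_hom B B') (k : frame_hom P P') : Prop :=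
  (forall x, k (pA x) = pA' (f x)) /\ (forall y, k (pB y) = pB' (g y)).

(** * Exponentials S^X (S the Sierpinski locale).
    [E] is O(S^X), [P] is O(S^X x X) with projections [pE], [pX], and
    [ev : OS -> P] is the frame map of the evaluation ev : S^X x X -> S. *)
Definition is_exponential (S X E P : frame)
  (pE : frame_hom E P) (pX : frame_hom X P) (ev : frame_hom S P) : Prop :=
  is_product E X P pE pX /\
  forall (Z Q : frame) (qZ : frame_hom Z Q) (qX : frame_hom X Q),
    is_product Z X Q qZ qX ->
    forall f : frame_hom S Q,
      (exists g : frame_hom E Z,
          forall k : frame_hom P Q,
            is_prod_hom pE pX qZ qX g (id_hom X) k ->
            forall a, k (ev a) = f a) /\
      (forall g1 g2 : frame_hom E Z,
          (forall k : frame_hom P Q,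
              is_prod_hom pE pX qZ qX g1 (id_hom X) k ->
              forall a, k (ev a) = f a) ->
          (forall k : frame_hom P Q,
              is_prod_hom pE pX qZ qX g2 (id_hom X) k ->
              forall a, k (ev a) = f a) ->
          forall y, g1 y = g2 y).

From Stdlib Require Import Classical FunctionalExtensionality PropExtensionality
  ProofIrrelevance IndefiniteDescription.

(* Since O(X) is a quotient of F, the frame map of Sigma^X x i_X is onto, so
   ev(sigma) lifts along it to O(Sigma^X x Sigma^G); the exponential transpose
   of the resulting map Sigma^X x Sigma^G -> Sigma is s.  The evaluation
   identity follows by uniqueness of product maps, and q o s = id by
   uniqueness of transposes.
   The product Sigma^X x Sigma^G is not among the data, so the coproduct of
   frames is built explicitly as the frame of C-ideals. *)

Lemma meet_comm (A : frame) a b : meet A a b = meet A b a.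
Proof. apply le_antisym; apply meet_glb; first [apply meet_l | apply meet_r]. Qed.

Lemma meet_mono (A : frame) a b c d :
  le A a c -> le A b d -> le A (meet A a b) (meet A c d).
Proof.
  intros Hac Hbd. apply meet_glb.
  - eapply le_trans; [apply meet_l | exact Hac].
  - eapply le_trans; [apply meet_r | exact Hbd].
Qed.

Lemma meet_eq_l (A : frame) a b : le A a b -> meet A a b = a.
Proof. intros; apply le_antisym; [apply meet_l | apply meet_glb; auto using le_refl]. Qed.

Lemma meet_idem (A : frame) a : meet A a a = a.
Proof. apply meet_eq_l, le_refl. Qed.

Lemma meet_top (A : frame) a : meet A a (top A) = a.
Proof. apply meet_eq_l, top_max. Qed.

Lemma meet_join_distr_r (A : frame) I f b :
  meet A (join A I f) b = join A I (fun i => meet A (f i) b).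
Proof.
  rewrite meet_comm, meet_join_distr. f_equal. extensionality i. apply meet_comm.
Qed.

Lemma meet_join_join_le (A : frame) I J f g c :
  (forall i j, le A (meet A (f i) (g j)) c) -> le A (meet A (join A I f) (join A J g)) c.
Proof.
  intros H. rewrite meet_join_distr_r. apply join_least. intro i.
  rewrite meet_join_distr. apply join_least. auto.
Qed.

Definition bot (A : frame) : A := join A Empty_set (fun e => match e with end).

Lemma bot_le (A : frame) x : le A (bot A) x.
Proof. apply join_least. intros []. Qed.

Lemma hom_mono {A B : frame} (h : frame_hom A B) a b : le A a b -> le B (h a) (h b).
Proof. intros H. rewrite <- (meet_eq_l _ _ _ H), hom_meet. apply meet_r. Qed.

Lemma hom_bot {A B : frame} (h : frame_hom A B) : h (bot A) = bot B.
Proof. unfold bot. rewrite hom_join. f_equal. extensionality e. destruct e. Qed.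

Lemma hom_le_bot {A B : frame} (h : frame_hom A B) a c : le A a (bot A) -> le B (h a) c.
Proof.
  intros H. eapply le_trans; [apply (hom_mono h _ _ H) |]. rewrite hom_bot. apply bot_le.
Qed.

Definition comp_hom {A B C : frame} (f : frame_hom A B) (g : frame_hom B C) :
  frame_hom A C.
Proof.
  refine (@FrameHom A C (fun x => g (f x)) _ _ _); intros;
    rewrite ?hom_top, ?hom_meet, ?hom_join; reflexivity.
Defined.

Definition join_boxes {A B P : frame} (pA : A -> P) (pB : B -> P)
  (D : A -> B -> Prop) : P :=
  join P {p : A * B | D (fst p) (snd p)}
    (fun p => meet P (pA (fst (proj1_sig p))) (pB (snd (proj1_sig p)))).

Lemma hom_join_boxes {A B P P' : frame} (h : frame_hom P P')
  (pA : frame_hom A P) (pB : frame_hom B P) (pA' : A -> P') (pB' : B -> P') D :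
  (forall a, h (pA a) = pA' a) -> (forall b, h (pB b) = pB' b) ->
  h (join_boxes pA pB D) = join_boxes pA' pB' D.
Proof.
  intros HA HB. unfold join_boxes. rewrite hom_join. f_equal.
  extensionality p. rewrite hom_meet, HA, HB. reflexivity.
Qed.

Section Coproduct.

Variables A B : frame.

(** A C-ideal is a down-closed set of pairs closed under joins in each
    coordinate separately; these form the coproduct frame. *)
Definition is_cideal (D : A -> B -> Prop) : Prop :=
  (forall a b a' b', D a b -> le A a' a -> le B b' b -> D a' b') /\
  (forall (I : Type) (f : I -> A) b, (forall i, D (f i) b) -> D (join A I f) b) /\
  (forall (I : Type) (f : I -> B) a, (forall i, D a (f i)) -> D a (join B I f)).

Definition cideal := {D : A -> B -> Prop | is_cideal D}.

Definition cideal_closure (U : A -> B -> Prop) (a : A) (b : B) : Prop :=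
  forall D, is_cideal D -> (forall x y, U x y -> D x y) -> D a b.

Lemma cideal_closure_is_cideal U : is_cideal (cideal_closure U).
Proof.
  split; [|split].
  - intros a b a' b' H Ha Hb D HD HU.
    pose proof (H D HD HU). destruct HD as [Hdown _]. eauto.
  - intros I f b H D HD HU.
    assert (Hf : forall i, D (f i) b) by (intro i; exact (H i D HD HU)).
    destruct HD as [_ [Hjoin _]]. auto.
  - intros I f a H D HD HU.
    assert (Hf : forall i, D a (f i)) by (intro i; exact (H i D HD HU)).
    destruct HD as [_ [_ Hjoin]]. auto.
Qed.

Lemma cideal_closure_incl (U : A -> B -> Prop) x y : U x y -> cideal_closure U x y.
Proof. intros H D _ HU. auto. Qed.

(* The empty join in either coordinate puts every pair with a bottom entry
   into each C-ideal. *)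
Lemma cideal_bot_l D : is_cideal D -> forall x y, le A x (bot A) -> D x y.
Proof.
  intros [Hdown [Hjoin _]] x y H. apply (Hdown (bot A) y); auto using le_refl.
  apply Hjoin. intros [].
Qed.

Lemma cideal_bot_r D : is_cideal D -> forall x y, le B y (bot B) -> D x y.
Proof.
  intros [Hdown [_ Hjoin]] x y H. apply (Hdown x (bot B)); auto using le_refl.
  apply Hjoin. intros [].
Qed.

Lemma cideal_ext (D1 D2 : cideal) :
  (forall a b, proj1_sig D1 a b <-> proj1_sig D2 a b) -> D1 = D2.
Proof.
  destruct D1 as [d1 p1], D2 as [d2 p2]; simpl. intros H.
  assert (d1 = d2) as <-.
  { extensionality a; extensionality b. apply propositional_extensionality; auto. }
  f_equal. apply proof_irrelevance.
Qed.

Definition cle (D1 D2 : cideal) : Prop :=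
  forall a b, proj1_sig D1 a b -> proj1_sig D2 a b.

Lemma cmeet_is_cideal (D1 D2 : cideal) :
  is_cideal (fun a b => proj1_sig D1 a b /\ proj1_sig D2 a b).
Proof.
  destruct D1 as [d1 [down1 [joinl1 joinr1]]], D2 as [d2 [down2 [joinl2 joinr2]]]; simpl.
  split; [|split].
  - intros a b a' b' [H1 H2] ? ?; split; eauto.
  - intros I f b H; split; [apply joinl1 | apply joinl2]; intro i; apply H.
  - intros I f b H; split; [apply joinr1 | apply joinr2]; intro i; apply H.
Qed.

Definition cmeet (D1 D2 : cideal) : cideal := exist _ _ (cmeet_is_cideal D1 D2).

Definition ctop : cideal := exist _ (fun _ _ => True) (conj (fun _ _ _ _ _ _ _ => I)
  (conj (fun _ _ _ _ => I) (fun _ _ _ _ => I))).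

Definition cjoin (I : Type) (f : I -> cideal) : cideal :=
  exist _ (cideal_closure (fun a b => exists i, proj1_sig (f i) a b))
    (cideal_closure_is_cideal _).

Lemma cjoin_least I f D : (forall i, cle (f i) D) -> cle (cjoin I f) D.
Proof.
  intros H a b Hab. apply (Hab (proj1_sig D) (proj2_sig D)).
  intros x y [i Hi]. exact (H i x y Hi).
Qed.

Lemma cmeet_cjoin_distr D I f :
  cmeet D (cjoin I f) = cjoin I (fun i => cmeet D (f i)).
Proof.
  apply cideal_ext; intros a b; simpl; split.
  - intros [HD Hab].
    set (U := fun x y => exists i, proj1_sig D x y /\ proj1_sig (f i) x y).
    (* Cutting down by (a, b) turns the closure of the union of the f i into
       the closure of the union of the D /\ f i. *)
    set (T := fun x y => cideal_closure U (meet A x a) (meet B y b)).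
    assert (HT : is_cideal T).
    { destruct (cideal_closure_is_cideal U) as [Hdown [Hjoinl Hjoinr]]. unfold T.
      split; [|split].
      - intros x y x' y' H Hx Hy.
        eapply Hdown; [exact H | |]; apply meet_mono; auto using le_refl.
      - intros J g y H. rewrite meet_join_distr_r. apply Hjoinl. auto.
      - intros J g x H. rewrite meet_join_distr_r. apply Hjoinr. auto. }
    assert (HTab : T a b).
    { apply Hab; auto. intros x y [i Hi]. apply cideal_closure_incl. exists i.
      destruct (proj2_sig D) as [HdownD _], (proj2_sig (f i)) as [Hdowni _]. split.
      - eapply HdownD; [exact HD | apply meet_r | apply meet_r].
      - eapply Hdowni; [exact Hi | apply meet_l | apply meet_l]. }
    unfold T in HTab. rewrite !meet_idem in HTab. exact HTab.
  - intros H. split.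
    + apply (H (proj1_sig D) (proj2_sig D)). intros x y [i [Hx _]]; auto.
    + apply (H _ (cideal_closure_is_cideal _)). intros x y [i [_ Hx]].
      apply cideal_closure_incl. exists i; auto.
Qed.

Definition coprod : frame.
Proof.
  refine (@Frame cideal cle cmeet ctop cjoin _ _ _ _ _ _ _ _ cjoin_least
            cmeet_cjoin_distr); unfold cle; simpl.
  - auto.
  - auto.
  - intros; apply cideal_ext; split; auto.
  - intros D1 D2 a b [H _]; exact H.
  - intros D1 D2 a b [_ H]; exact H.
  - intros D1 D2 D3 H1 H2 a b H; split; auto.
  - intros; exact I.
  - intros J f i a b H. apply cideal_closure_incl. exists i; exact H.
Defined.

Definition box_pred (a0 : A) (b0 : B) (x : A) (y : B) : Prop :=
  (le A x a0 /\ le B y b0) \/ le A x (bot A) \/ le B y (bot B).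

Lemma box_is_cideal a0 b0 : is_cideal (box_pred a0 b0).
Proof.
  unfold box_pred. split; [|split].
  - intros a b a' b' [[H1 H2] | [H | H]] Ha Hb.
    + left; split; eapply le_trans; eauto.
    + right; left; eapply le_trans; eauto.
    + right; right; eapply le_trans; eauto.
  - intros I f b H.
    destruct (classic (le B b (bot B))) as [Hb | Hb]; [right; right; exact Hb |].
    destruct (classic (le B b b0)) as [Hbb0 | Hbb0].
    + left; split; auto. apply join_least. intro j.
      destruct (H j) as [[? ?] | [? | ?]]; [auto | eapply le_trans; eauto using bot_le | contradiction].
    + right; left. apply join_least. intro j.
      destruct (H j) as [[? ?] | [? | ?]]; [contradiction | auto | contradiction].
  - intros I f a H.
    destruct (classic (le A a (bot A))) as [Ha | Ha]; [right; left; exact Ha |].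
    destruct (classic (le A a a0)) as [Haa0 | Haa0].
    + left; split; auto. apply join_least. intro j.
      destruct (H j) as [[? ?] | [? | ?]]; [auto | contradiction | eapply le_trans; eauto using bot_le].
    + right; right. apply join_least. intro j.
      destruct (H j) as [[? ?] | [? | ?]]; [contradiction | contradiction | auto].
Qed.

Definition box (a0 : A) (b0 : B) : coprod := exist _ _ (box_is_cideal a0 b0).

Lemma box_top : box (top A) (top B) = top coprod.
Proof.
  apply cideal_ext; simpl; unfold box_pred; split; auto.
  intros _; left; split; apply top_max.
Qed.

Lemma box_meet a a' b b' :
  box (meet A a a') (meet B b b') = meet coprod (box a b) (box a' b').
Proof.
  apply cideal_ext; simpl; unfold box_pred; intros x y; split.
  - intros [[H1 H2] | [H | H]]; auto.
    split; left; split; (eapply le_trans; [eassumption | first [apply meet_l | apply meet_r]]).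
  - intros [[[H1 H2] | [H | H]] [[H3 H4] | [H' | H']]]; auto.
    left; split; apply meet_glb; auto.
Qed.

Lemma box_join_l I f b :
  box (join A I f) b = join coprod I (fun i => box (f i) b).
Proof.
  apply cideal_ext; simpl; intros x y; split.
  - pose proof (cideal_closure_is_cideal (fun a b' => exists i, box_pred (f i) b a b'))
      as Hcl.
    intros [[Hx Hy] | [H | H]]; [| apply cideal_bot_l | apply cideal_bot_r]; auto.
    destruct Hcl as [Hdown [Hjoin _]].
    apply (Hdown (join A I (fun i => meet A x (f i))) y); auto using le_refl.
    + apply Hjoin. intro i. apply cideal_closure_incl. exists i.
      left; split; [apply meet_r | exact Hy].
    + rewrite <- meet_join_distr, meet_eq_l; auto using le_refl.
  - intros H. apply (H _ (box_is_cideal (join A I f) b)).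
    intros a b' [i [[H1 H2] | [H' | H']]]; unfold box_pred; auto.
    left; split; auto. eapply le_trans; [exact H1 | apply join_ub].
Qed.

Lemma box_join_r I a f :
  box a (join B I f) = join coprod I (fun i => box a (f i)).
Proof.
  apply cideal_ext; simpl; intros x y; split.
  - pose proof (cideal_closure_is_cideal (fun a' b => exists i, box_pred a (f i) a' b))
      as Hcl.
    intros [[Hx Hy] | [H | H]]; [| apply cideal_bot_l | apply cideal_bot_r]; auto.
    destruct Hcl as [Hdown [_ Hjoin]].
    apply (Hdown x (join B I (fun i => meet B y (f i)))); auto using le_refl.
    + apply Hjoin. intro i. apply cideal_closure_incl. exists i.
      left; split; [exact Hx | apply meet_r].
    + rewrite <- meet_join_distr, meet_eq_l; auto using le_refl.
  - intros H. apply (H _ (box_is_cideal a (join B I f))).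
    intros a' b [i [[H1 H2] | [H' | H']]]; unfold box_pred; auto.
    left; split; auto. eapply le_trans; [exact H2 | apply join_ub].
Qed.

Definition coprod_inl : frame_hom A coprod.
Proof.
  refine (@FrameHom A coprod (fun a => box a (top B)) box_top _ _).
  - intros a a'. rewrite <- box_meet, meet_idem. reflexivity.
  - intros I f. apply box_join_l.
Defined.

Definition coprod_inr : frame_hom B coprod.
Proof.
  refine (@FrameHom B coprod (fun b => box (top A) b) box_top _ _).
  - intros b b'. rewrite <- box_meet, meet_idem. reflexivity.
  - intros I f. apply box_join_r.
Defined.

Lemma coprod_eq_join_boxes (D : coprod) :
  D = join_boxes coprod_inl coprod_inr (proj1_sig D).
Proof.
  apply cideal_ext; simpl; intros a b; split.
  - intros H. apply cideal_closure_incl. exists (exist _ (a, b) H). simpl.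
    split; left; split; auto using le_refl, top_max.
  - intros H. apply (H _ (proj2_sig D)).
    intros x y [[[a0 b0] Hp] [H1 H2]]; simpl in *. unfold box_pred in *.
    pose proof (proj2_sig D) as HD.
    destruct H1 as [[H1 _] | [H1 | H1]]; [| apply cideal_bot_l | apply cideal_bot_r]; auto.
    destruct H2 as [[_ H2] | [H2 | H2]]; [| apply cideal_bot_l | apply cideal_bot_r]; auto.
    destruct HD as [Hdown _]. eauto.
Qed.

Section Lift.

Variables (L : frame) (al : frame_hom A L) (be : frame_hom B L).

Definition coprod_lift_fun (D : coprod) : L := join_boxes al be (proj1_sig D).

Lemma coprod_lift_mono (D1 D2 : coprod) :
  cle D1 D2 -> le L (coprod_lift_fun D1) (coprod_lift_fun D2).
Proof.
  intros H. apply join_least. intros [p Hp].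
  eapply le_trans; [| apply (join_ub _ _ _ (exist _ p (H _ _ Hp)))]. apply le_refl.
Qed.

Lemma coprod_lift_top : coprod_lift_fun (top coprod) = top L.
Proof.
  apply le_antisym; [apply top_max |].
  eapply le_trans; [| apply (join_ub _ _ _ (exist _ (top A, top B) I))].
  simpl. rewrite !hom_top, meet_idem. apply le_refl.
Qed.

Lemma coprod_lift_meet D1 D2 :
  coprod_lift_fun (meet coprod D1 D2) =
  meet L (coprod_lift_fun D1) (coprod_lift_fun D2).
Proof.
  apply le_antisym.
  - apply meet_glb; apply coprod_lift_mono; intros a b [? ?]; auto.
  - apply meet_join_join_le. intros [[x1 y1] H1] [[x2 y2] H2]. simpl in *.
    assert (H12 : proj1_sig (meet coprod D1 D2) (meet A x1 x2) (meet B y1 y2)).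
    { destruct (proj2_sig D1) as [Hdown1 _], (proj2_sig D2) as [Hdown2 _]. split.
      - eapply Hdown1; [exact H1 | apply meet_l | apply meet_l].
      - eapply Hdown2; [exact H2 | apply meet_r | apply meet_r]. }
    eapply le_trans; [| apply (join_ub _ _ _ (exist _ (meet A x1 x2, meet B y1 y2) H12))].
    simpl. rewrite !hom_meet. apply meet_glb; apply meet_glb.
    + eapply le_trans; [apply meet_l | apply meet_l].
    + eapply le_trans; [apply meet_r | apply meet_l].
    + eapply le_trans; [apply meet_l | apply meet_r].
    + eapply le_trans; [apply meet_r | apply meet_r].
Qed.

Lemma coprod_lift_join I f :
  coprod_lift_fun (join coprod I f) = join L I (fun i => coprod_lift_fun (f i)).
Proof.
  apply le_antisym.
  - set (R := join L I (fun i => coprod_lift_fun (f i))).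
    (* The pairs whose image lies below R form a C-ideal containing every f i. *)
    set (T := fun x y => le L (meet L (al x) (be y)) R).
    assert (HT : is_cideal T).
    { unfold T; split; [|split].
      - intros a b a' b' H Ha Hb. eapply le_trans; [| exact H].
        apply meet_mono; apply hom_mono; auto.
      - intros J g b H. rewrite hom_join, meet_join_distr_r. apply join_least. auto.
      - intros J g a H. rewrite hom_join, meet_join_distr. apply join_least. auto. }
    apply join_least. intros [p Hp].
    apply (Hp T HT). intros x y [i Hi].
    eapply le_trans; [| apply (join_ub _ _ _ i)].
    eapply le_trans; [| apply (join_ub _ _ _ (exist _ (x, y) Hi))]. apply le_refl.
  - apply join_least. intro i. apply coprod_lift_mono.
    intros a b H. apply cideal_closure_incl. exists i; auto.
Qed.

Definition coprod_lift : frame_hom coprod L :=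
  FrameHom coprod L coprod_lift_fun coprod_lift_top coprod_lift_meet coprod_lift_join.

Lemma coprod_lift_box a b : coprod_lift (box a b) = meet L (al a) (be b).
Proof.
  apply le_antisym.
  - apply join_least. intros [[x y] Hp]; simpl in *.
    destruct Hp as [[Hx Hy] | [H | H]].
    + apply meet_mono; apply hom_mono; auto.
    + eapply le_trans; [apply meet_l | apply hom_le_bot; exact H].
    + eapply le_trans; [apply meet_r | apply hom_le_bot; exact H].
  - assert (Hab : box_pred a b a b) by (left; split; apply le_refl).
    apply (join_ub _ _ (fun p => meet L (al (fst (proj1_sig p))) (be (snd (proj1_sig p))))
             (exist _ (a, b) Hab)).
Qed.

Lemma coprod_lift_inl a : coprod_lift (coprod_inl a) = al a.
Proof.
  change (coprod_lift (box a (top B)) = al a).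
  rewrite coprod_lift_box, hom_top. apply meet_top.
Qed.

Lemma coprod_lift_inr b : coprod_lift (coprod_inr b) = be b.
Proof.
  change (coprod_lift (box (top A) b) = be b).
  rewrite coprod_lift_box, hom_top, meet_comm. apply meet_top.
Qed.

End Lift.

Lemma coprod_is_product : is_product A B coprod coprod_inl coprod_inr.
Proof.
  split.
  - intros L al be. exists (coprod_lift L al be).
    split; [apply coprod_lift_inl | apply coprod_lift_inr].
  - intros L h1 h2 H1 H2 z. rewrite (coprod_eq_join_boxes z).
    rewrite (hom_join_boxes h1 _ _ _ _ _ (fun _ => eq_refl) (fun _ => eq_refl)),
            (hom_join_boxes h2 _ _ (fun a => h1 (coprod_inl a)) (fun b => h1 (coprod_inr b)));
      auto.
Qed.

End Coproduct.

Lemma id_is_prod_hom {A B P : frame} (pA : frame_hom A P) (pB : frame_hom B P) :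
  is_prod_hom pA pB pA pB (id_hom A) (id_hom B) (id_hom P).
Proof. split; reflexivity. Qed.

Lemma comp_is_prod_hom {A B P A' B' P' A'' B'' P'' : frame}
  {pA : frame_hom A P} {pB : frame_hom B P} {pA' : frame_hom A' P'} {pB' : frame_hom B' P'}
  {pA'' : frame_hom A'' P''} {pB'' : frame_hom B'' P''}
  {f : frame_hom A A'} {g : frame_hom B B'} {k : frame_hom P P'}
  {f' : frame_hom A' A''} {g' : frame_hom B' B''} {k' : frame_hom P' P''} :
  is_prod_hom pA pB pA' pB' f g k -> is_prod_hom pA' pB' pA'' pB'' f' g' k' ->
  is_prod_hom pA pB pA'' pB'' (comp_hom f f') (comp_hom g g') (comp_hom k k').
Proof.
  intros [HkA HkB] [Hk'A Hk'B]. split; intro; simpl; rewrite ?HkA, ?HkB; auto.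
Qed.

Section Products.

Context {A B P : frame} {pA : frame_hom A P} {pB : frame_hom B P}.
Hypothesis HP : is_product A B P pA pB.

Lemma prod_hom_exists {A' B' P' : frame} (pA' : frame_hom A' P') (pB' : frame_hom B' P')
  (f : frame_hom A A') (g : frame_hom B B') :
  exists k, is_prod_hom pA pB pA' pB' f g k.
Proof.
  destruct (proj1 HP P' (comp_hom f pA') (comp_hom g pB')) as [k [Hk1 Hk2]].
  exists k; split; assumption.
Qed.

Lemma prod_hom_unique {A' B' P' : frame} {pA' : frame_hom A' P'} {pB' : frame_hom B' P'}
  {f1 f2 : frame_hom A A'} {g1 g2 : frame_hom B B'} {k1 k2 : frame_hom P P'} :
  is_prod_hom pA pB pA' pB' f1 g1 k1 -> is_prod_hom pA pB pA' pB' f2 g2 k2 ->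
  (forall a, f1 a = f2 a) -> (forall b, g1 b = g2 b) -> forall z, k1 z = k2 z.
Proof.
  intros [Hk1A Hk1B] [Hk2A Hk2B] Hf Hg. apply (proj2 HP); intro.
  - rewrite Hk1A, Hk2A, Hf. reflexivity.
  - rewrite Hk1B, Hk2B, Hg. reflexivity.
Qed.

Lemma product_eq_join_boxes (z : P) : exists D, z = join_boxes pA pB D.
Proof.
  destruct (proj1 HP _ (coprod_inl A B) (coprod_inr A B)) as [psi [Hpsi1 Hpsi2]].
  set (phi := coprod_lift A B P pA pB).
  pose proof (coprod_lift_inl A B P pA pB) as Hphi1.
  pose proof (coprod_lift_inr A B P pA pB) as Hphi2.
  exists (proj1_sig (psi z)).
  transitivity (phi (psi z)).
  - symmetry. apply (proj2 HP P (comp_hom psi phi) (id_hom P)); intro; simpl.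
    + rewrite Hpsi1. apply Hphi1.
    + rewrite Hpsi2. apply Hphi2.
  - rewrite (coprod_eq_join_boxes A B (psi z)) at 1.
    apply hom_join_boxes; assumption.
Qed.

Lemma prod_hom_surjective {A' B' P' : frame}
  {pA' : frame_hom A' P'} {pB' : frame_hom B' P'}
  {f : frame_hom A' A} {g : frame_hom B' B} {k : frame_hom P' P} :
  is_prod_hom pA' pB' pA pB f g k ->
  (forall a, exists a', f a' = a) -> (forall b, exists b', g b' = b) ->
  forall z, exists w, k w = z.
Proof.
  intros [HkA HkB] Hf Hg z.
  destruct (functional_choice _ Hf) as [cf Hcf].
  destruct (functional_choice _ Hg) as [cg Hcg].
  destruct (product_eq_join_boxes z) as [D ->].
  exists (join P' {p : A * B | D (fst p) (snd p)}
            (fun p => meet P' (pA' (cf (fst (proj1_sig p)))) (pB' (cg (snd (proj1_sig p)))))).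
  rewrite hom_join. unfold join_boxes. f_equal. extensionality p.
  rewrite hom_meet, HkA, HkB, Hcf, Hcg. reflexivity.
Qed.

End Products.

Definition transposes {S X E P Z Q : frame}
  (pE : frame_hom E P) (pX : frame_hom X P) (qZ : frame_hom Z Q) (qX : frame_hom X Q)
  (ev : frame_hom S P) (g : frame_hom E Z) (f : frame_hom S Q) : Prop :=
  forall k, is_prod_hom pE pX qZ qX g (id_hom X) k -> forall a, k (ev a) = f a.

(* Both [comp_hom q s] and the identity transpose [ev] to itself. *)
Lemma transposes_retraction {S X E1 P1 E2 P3 : frame}
  {p1E : frame_hom E1 P1} {p1X : frame_hom X P1} {ev : frame_hom S P1}
  {p3E : frame_hom E2 P3} {p3X : frame_hom X P3} {evt : frame_hom S P3}
  {q : frame_hom E1 E2} {s : frame_hom E2 E1} :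
  is_exponential S X E1 P1 p1E p1X ev -> is_product E2 X P3 p3E p3X ->
  transposes p1E p1X p3E p3X ev q evt -> transposes p3E p3X p1E p1X evt s ev ->
  forall a, s (q a) = a.
Proof.
  intros [HP1 Hexp] HP3 Hq Hs.
  apply (proj2 (Hexp E1 P1 p1E p1X HP1 ev) (comp_hom q s) (id_hom E1)).
  - intros kk Hkk b.
    destruct (prod_hom_exists HP1 p3E p3X q (id_hom X)) as [kq Hkq].
    destruct (prod_hom_exists HP3 p1E p1X s (id_hom X)) as [ks Hks].
    rewrite (prod_hom_unique HP1 Hkk (comp_is_prod_hom Hkq Hks)
               (fun _ => eq_refl) (fun _ => eq_refl)).
    simpl. rewrite (Hq kq Hkq). apply Hs, Hks.
  - intros kk Hkk b.
    exact (prod_hom_unique HP1 Hkk (id_is_prod_hom p1E p1X)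
             (fun _ => eq_refl) (fun _ => eq_refl) (ev b)).
Qed.

(* Both composites are product maps of [s] and [iX]. *)
Lemma transposes_restrict {S X F E1 P1 E2 P2 P3 Q : frame}
  {p1E : frame_hom E1 P1} {p1X : frame_hom X P1} {ev : frame_hom S P1}
  {p2E : frame_hom E2 P2} {p2F : frame_hom F P2} {evG : frame_hom S P2}
  {p3E : frame_hom E2 P3} {p3X : frame_hom X P3}
  {qE : frame_hom E1 Q} {qF : frame_hom F Q}
  {iX : frame_hom F X} {k : frame_hom P2 P3} {m : frame_hom Q P1}
  {s : frame_hom E2 E1} {f : frame_hom S Q} :
  is_product E2 F P2 p2E p2F ->
  is_prod_hom p2E p2F p3E p3X (id_hom E2) iX k ->
  is_prod_hom qE qF p1E p1X (id_hom E1) iX m ->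
  transposes p2E p2F qE qF evG s f -> (forall a, m (f a) = ev a) ->
  transposes p3E p3X p1E p1X (comp_hom evG k) s ev.
Proof.
  intros HP2 Hk Hm Hs Hmf ks Hks a.
  destruct (prod_hom_exists HP2 qE qF s (id_hom F)) as [kk Hkk].
  change (comp_hom k ks (evG a) = ev a).
  rewrite (prod_hom_unique HP2 (comp_is_prod_hom Hk Hks) (comp_is_prod_hom Hkk Hm)
             (fun _ => eq_refl) (fun _ => eq_refl)).
  simpl. rewrite (Hs kk Hkk). apply Hmf.
Qed.

Theorem proposition3p2
  (* the Sierpinski locale: O(Sigma) is the free frame on one generator *)
  (S : frame) (sig : unit -> S) (HS : is_free_frame unit S sig)
  (* the locally compact locale X *)
  (X : frame) (HXlc : locally_compact X)
  (* the presentation OX = <G | R>: O(Sigma^G) = free frame F on G, and the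
     quotient map i_X^* : F -> OX of the sublocale inclusion i_X *)
  (G : Type) (F : frame) (eta : G -> F) (HF : is_free_frame G F eta)
  (iX : frame_hom F X) (HiX : forall x : X, exists y : F, iX y = x)
  (* the exponential Sigma^X with evaluation ev : Sigma^X x X -> Sigma *)
  (E1 P1 : frame) (p1E : frame_hom E1 P1) (p1X : frame_hom X P1)
  (ev : frame_hom S P1) (Hev : is_exponential S X E1 P1 p1E p1X ev)
  (* the exponential Sigma^(Sigma^G) with evaluation ev_{Sigma^G} *)
  (E2 P2 : frame) (p2E : frame_hom E2 P2) (p2F : frame_hom F P2)
  (evG : frame_hom S P2) (HevG : is_exponential S F E2 P2 p2E p2F evG)
  (* the product Sigma^(Sigma^G) x X *)
  (P3 : frame) (p3E : frame_hom E2 P3) (p3X : frame_hom X P3)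
  (HP3 : is_product E2 X P3 p3E p3X)
  (* the frame map of Sigma^(Sigma^G) x i_X : Sigma^(Sigma^G) x X -> Sigma^(Sigma^G) x Sigma^G *)
  (k : frame_hom P2 P3)
  (Hk : is_prod_hom p2E p2F p3E p3X (id_hom E2) iX k)
  (* q : Sigma^(Sigma^G) -> Sigma^X with ev o (q x X) = ev~ := ev_{Sigma^G} o (Sigma^(Sigma^G) x i_X) *)
  (q : frame_hom E1 E2)
  (Hq : forall kq : frame_hom P1 P3,
      is_prod_hom p1E p1X p3E p3X q (id_hom X) kq ->
      forall a : S, kq (ev a) = k (evG a)) :
  exists s : frame_hom E2 E1,
    (* q o s = id_{Sigma^X} *)
    (forall a : E1, s (q a) = a) /\
    (* ev~ o (s x X) = ev *)
    (forall ks : frame_hom P3 P1,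
      is_prod_hom p3E p3X p1E p1X s (id_hom X) ks ->
      forall a : S, ks (k (evG a)) = ev a).
Proof.
  pose proof (coprod_is_product E1 F) as HQ.
  destruct (prod_hom_exists HQ p1E p1X (id_hom E1) iX) as [m Hm].
  destruct (prod_hom_surjective (proj1 Hev) Hm (fun a => ex_intro _ a eq_refl) HiX
              (ev (sig tt))) as [e He].
  destruct (proj1 HS _ (fun _ => e)) as [f Hf].
  assert (Hmf : forall a, m (f a) = ev a).
  { apply (proj2 HS _ (comp_hom f m) ev). intros []. simpl. rewrite Hf. exact He. }
  destruct (proj1 (proj2 HevG _ _ _ _ HQ f)) as [s Hs].
  pose proof (transposes_restrict (proj1 HevG) Hk Hm Hs Hmf) as Hevs.
  exists s. split; [| exact Hevs].
  exact (transposes_retraction (evt := comp_hom evG k) Hev HP3 Hq Hevs).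
Qed.
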